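(* Let $k\geq 2$ be an integer, and for $n\ge 1$ let $P_{n,k}=B_k(n)/k^n$ be the probability that a uniformly random length-$n$ word over $\Sigma_k$ has a unique border, where $B_k(n)$ is the number of length-$n$ words over $\Sigma_k$ with a unique border. Then the limit $P_k=\lim_{n\to\infty}P_{n,k}$ exists.
   Context: $\Sigma_k=\{0,1,\ldots,k-1\}$. A border of a word $w$ is a non-empty word that is both a proper prefix and a proper suffix of $w$. A word has a unique border if it has exactly one border. *)

From mathcomp Require Import all_boot.
From Stdlib Require Import Reals.

Set Implicit Arguments. Unset Strict Implicit. Unset Printing Implicit Defensive.

Definition is_border {T : eqType} (u w : seq T) : bool :=
  [&& 0 < size u, size u < size w, prefix u w & suffix u w].

(* The list of borders of w: every border is a prefix, hence of the form
   take i w; these candidates are pairwise distinct (distinct lengths). *)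
Definition borders {T : eqType} (w : seq T) : seq (seq T) :=
  [seq u <- [seq take i w | i <- iota 0 (size w).+1] | is_border u w].

Definition unique_border {T : eqType} (w : seq T) : bool :=
  size (borders w) == 1.

Definition B (k n : nat) : nat :=
  #|[set w : n.-tuple 'I_k | unique_border (tval w)]|.

Definition P (k n : nat) : R := (INR (B k n) / INR (expn k n))%R.

(** Inserting a letter in the middle of a word of length n does not change
    whether it has a unique border, as long as neither word has a border of
    length at least half its size: all shorter borders live in the two halves,
    which the insertion leaves intact.  A word of length N with a border of
    length m is determined by its first N - m letters, so at most
    2 k^(N - N/2) words of length N have such a long border.  Hence
    |B_k(n+1) - k B_k(n)| <= 4 k^(n+1 - n/2), i.e.
    |P_{n+1,k} - P_{n,k}| <= 4 / k^(n/2), and the increments of P_{n,k} are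
    dominated by a convergent geometric series. *)
From Stdlib Require Import Reals Lra.
From Coquelicot Require Import Coquelicot.
From mathcomp Require Import all_boot zify.

Set Implicit Arguments. Unset Strict Implicit. Unset Printing Implicit Defensive.
Local Close Scope R_scope.
Local Open Scope nat_scope.

Lemma half_bounds n : n./2 + n./2 <= n <= n./2 + n./2 + 1.
Proof. by have := odd_double_half n; rewrite -addnn; case: (odd n) => /= <-; lia. Qed.

Section Borders.
Variable T : eqType.
Implicit Types (s w : seq T) (x : T).

Definition has_border w i :=
  [&& 0 < i, i < size w & take i w == drop (size w - i) w].

Lemma size_borders w : size (borders w) = count (has_border w) (iota 0 (size w).+1).
Proof.
rewrite /borders size_filter count_map; apply: eq_in_count => i.
rewrite mem_iota => /andP[_ lei] /=; rewrite /is_border /has_border size_take.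
case: (ltnP i (size w)) => [ltiw|]; first by rewrite prefix_take suffixE size_take ltiw eq_sym.
by rewrite ltnn /= !andbF.
Qed.

Lemma unique_borderE w M : size w < M ->
  unique_border w = (count (has_border w) (iota 0 M) == 1).
Proof.
move=> ltwM; rewrite /unique_border size_borders -(subnKC ltwM) iotaD count_cat.
rewrite [X in _ + X](@eq_in_count _ _ pred0) ?count_pred0 ?addn0 //.
by move=> i; rewrite mem_iota /has_border => /andP[lti _]; apply/and3P => -[_ ltiw _]; lia.
Qed.

Definition no_long_border w :=
  ~~ has (has_border w) (iota (size w)./2 (size w - (size w)./2)).

Lemma no_long_borderP w i : no_long_border w -> has_border w i -> i < (size w)./2.
Proof.
move=> /hasPn noLong wi; rewrite ltnNge; apply/negP => lei.
have := half_bounds (size w); case/and3P: (wi) => _ ltiw _ bounds.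
have /noLong : i \in iota (size w)./2 (size w - (size w)./2) by rewrite mem_iota; lia.
by rewrite wi.
Qed.

Definition insert_mid s x := take (size s)./2 s ++ x :: drop (size s)./2 s.

Lemma size_insert_mid s x : size (insert_mid s x) = (size s).+1.
Proof.
rewrite /insert_mid size_cat /= size_take size_drop.
by have := half_bounds (size s); case: ifP; lia.
Qed.

Lemma has_border_insert_mid s x i : i <= (size s)./2 ->
  has_border (insert_mid s x) i = has_border s i.
Proof.
move=> lei; rewrite /has_border size_insert_mid /insert_mid.
set n := size s; set c := n./2; have := half_bounds n; rewrite -/c => bounds.
case: (posnP i) => [-> //|i_gt0] /=.
have size_c : size (take c s) = c by rewrite size_take; case: ifP; lia.
rewrite takel_cat ?size_c // take_takel // drop_cat size_c ifN; last lia.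
have -> : n.+1 - i - c = (n - i - c).+1 by lia.
have lt_in : i < n by lia.
by rewrite /= drop_drop subnK ?lt_in ?ltnS ?(ltnW lt_in); lia.
Qed.

Lemma unique_border_insert_mid s x :
  no_long_border (insert_mid s x) -> no_long_border s ->
  unique_border (insert_mid s x) = unique_border s.
Proof.
move=> noLong_ins noLong.
have bounds := half_bounds (size s); have bounds1 := half_bounds (size s).+1.
rewrite (@unique_borderE _ (size s).+2) ?size_insert_mid //.
rewrite (@unique_borderE _ (size s).+2) //; congr (_ == 1); apply: eq_count => i.
case: (leqP i (size s)./2) => [|lti]; first exact: has_border_insert_mid.
case ins_i: (has_border _ i).
  by have := no_long_borderP noLong_ins ins_i; rewrite size_insert_mid; lia.
by case s_i: (has_border s i) => //; have := no_long_borderP noLong s_i; lia.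
Qed.

(* A border of length m makes size w - m a period of w. *)
Lemma eq_from_border w w' m : size w = size w' ->
  has_border w m -> has_border w' m ->
  take (size w - m) w = take (size w - m) w' -> w = w'.
Proof.
move=> sizeE /and3P[_ ltm /eqP w_m] /and3P[_ _ /eqP w'_m] prefixE.
have x0 : T by case: w ltm {w_m prefixE sizeE} => [//|x0 _] _; exact: x0.
apply: (eq_from_nth (x0 := x0) sizeE) => i; elim/ltn_ind: i => i IH lti.
set p := size w - m.
case: (ltnP i p) => [ltip|leip].
  by rewrite -(nth_take x0 ltip) prefixE nth_take.
have periodic v : size v = size w -> take m v = drop (size v - m) v ->
    nth x0 v i = nth x0 v (i - p).
  move=> sizev v_m; have -> : i = size v - m + (i - p) by rewrite /p; lia.
  by rewrite -nth_drop -v_m nth_take; [congr nth; rewrite /p | rewrite /p]; lia.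
rewrite (periodic _ erefl w_m) (periodic _ (esym sizeE) w'_m).
by apply: IH; rewrite /p; lia.
Qed.

End Borders.

Lemma leq_card_agree_off (T : finType) (X Y Z : {set T}) :
  {in ~: Z, X =i Y} -> #|X| <= #|Y| + #|Z|.
Proof.
move=> XY; apply: leq_trans (leq_card_setU Y Z).1.
apply/subset_leq_card/subsetP => t Xt; rewrite inE.
by have [Zt|notZt] := boolP (t \in Z); rewrite ?orbT // -XY ?Xt // inE.
Qed.

Lemma sum_iota_expn_le k a d : 1 < k ->
  \sum_(m <- iota a d) k ^ (a + d - m) <= 2 * k ^ d.
Proof.
move=> k_gt1; elim: d a => [|d IH] a; first by rewrite big_nil.
rewrite /= big_cons addKn; have := IH a.+1; rewrite addSnnS expnS; nia.
Qed.

Section Counting.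
Variable k : nat.
Hypothesis k_gt1 : 1 < k.
Local Notation word N := (N.-tuple 'I_k).

Lemma card_has_border N m : #|[set t : word N | has_border t m]| <= k ^ (N - m).
Proof.
have prefix_sizeP (t : word N) : size (take (N - m) t) == N - m.
  by rewrite size_takel ?size_tuple ?leq_subr.
pose prefix t : word (N - m) := Tuple (prefix_sizeP t).
have -> : k ^ (N - m) = #|{: word (N - m)}| by rewrite card_tuple card_ord.
apply: (@leq_card_in _ _ prefix) => t t'; rewrite !inE => t_m t'_m /(congr1 val) /= tt'.
by apply/val_inj/(eq_from_border _ t_m t'_m); rewrite !size_tuple.
Qed.

Lemma card_has_border_in N r :
  #|[set t : word N | has (has_border t) r]| <= \sum_(m <- r) k ^ (N - m).
Proof.
elim: r => [|m r IH]; first by rewrite big_nil leqn0 cards_eq0; apply/eqP/setP => t; rewrite !inE.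
rewrite big_cons (_ : [set t | _] =
  [set t : word N | has_border t m] :|: [set t : word N | has (has_border t) r]).
  exact: leq_trans (leq_card_setU _ _).1 (leq_add (card_has_border _ _) IH).
by apply/setP => t; rewrite !inE.
Qed.

Definition long_bordered N := [set t : word N | ~~ no_long_border t].

Lemma card_long_bordered N : #|long_bordered N| <= 2 * k ^ (N - N./2).
Proof.
rewrite (_ : long_bordered N = [set t : word N | has (has_border t) (iota N./2 (N - N./2))]).
  apply: leq_trans (card_has_border_in _ _) _.
  by have := sum_iota_expn_le N./2 (N - N./2) k_gt1; rewrite subnKC //; have := half_bounds N; lia.
by apply/setP => t; rewrite !inE /no_long_border size_tuple negbK.
Qed.

Lemma insert_mid_tupleP n (t : word n) x : size (insert_mid t x) == n.+1.
Proof. by rewrite size_insert_mid size_tuple. Qed.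

Definition insert_mid_tuple n (tx : word n * 'I_k) : word n.+1 :=
  Tuple (insert_mid_tupleP tx.1 tx.2).

Lemma insert_mid_tuple_bij n : bijective (@insert_mid_tuple n).
Proof.
apply: inj_card_bij; last by rewrite card_prod !card_tuple !card_ord expnSr.
move=> [t x] [t' x'] /(congr1 val); rewrite /= /insert_mid !size_tuple.
have le_half : n./2 <= n by have := half_bounds n; lia.
move/eqP; rewrite eqseq_cat; last by rewrite !size_takel ?size_tuple.
case/andP => /eqP take_t /eqP [-> drop_t]; congr (_, _); apply: val_inj => /=.
by rewrite -(cat_take_drop n./2 t) -(cat_take_drop n./2 t') take_t drop_t.
Qed.

Lemma card_long_bordered_succ n :
  #|long_bordered n.+1| + #|long_bordered n| * k <= 4 * k ^ (n.+1 - n./2).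
Proof.
have bounds := half_bounds n; have bounds1 := half_bounds n.+1.
have le_exp : k ^ (n.+1 - n.+1./2) <= k * k ^ (n - n./2).
  by rewrite -expnS; apply: leq_pexp2l; lia.
rewrite subSn ?expnS; last lia.
rewrite (_ : 4 = 2 + 2) // mulnDl; apply: leq_add.
  by apply: leq_trans (card_long_bordered _) _; rewrite leq_mul2l le_exp orbT.
apply: leq_trans (leq_mul (card_long_bordered n) (leqnn k)) _.
by rewrite mulnCA mulnC.
Qed.

Definition unique_bordered N := [set t : word N | unique_border t].

Lemma B_succ_near n :
  B k n.+1 <= B k n * k + 4 * k ^ (n.+1 - n./2) /\
  B k n * k <= B k n.+1 + 4 * k ^ (n.+1 - n./2).
Proof.
pose ins := @insert_mid_tuple n.
have ins_bij (D : {set word n.+1}) : {on D, bijective ins}.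
  exact/onW_bij/insert_mid_tuple_bij.
pose X := ins @^-1: unique_bordered n.+1.
pose Y := setX (unique_bordered n) [set: 'I_k].
pose Z := ins @^-1: long_bordered n.+1 :|: setX (long_bordered n) [set: 'I_k].
have cardX : #|X| = B k n.+1 by rewrite on_card_preimset.
have cardY : #|Y| = B k n * k by rewrite cardsX cardsT card_ord.
have cardZ : #|Z| <= 4 * k ^ (n.+1 - n./2).
  apply: leq_trans (leq_card_setU _ _).1 _.
  by rewrite on_card_preimset // cardsX cardsT card_ord card_long_bordered_succ.
have XY : {in ~: Z, X =i Y}.
  move=> [t x]; rewrite !inE negb_or !negbK /= !andbT => /andP[noLong_ins noLong].
  exact: unique_border_insert_mid.
rewrite -cardX -cardY; split; apply: leq_trans (leq_add (leqnn _) cardZ).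
  exact: leq_card_agree_off.
by apply: leq_card_agree_off => tx /XY.
Qed.

End Counting.

Local Open Scope R_scope.

Lemma Rabs_INR_sub_le a b e : (a <= b + e)%N -> (b <= a + e)%N -> Rabs (INR a - INR b) <= INR e.
Proof. by move=> /leP/le_INR + /leP/le_INR; rewrite !plus_INR => ? ?; apply: Rabs_le; lra. Qed.

Lemma INR_expn a b : INR (a ^ b)%N = INR a ^ b.
Proof. by elim: b => [|b IH] //=; rewrite expnS mult_INR IH. Qed.

Lemma P_succ_sub_le k n : (1 < k)%N -> Rabs (P k n.+1 - P k n) <= 4 / INR k ^ n./2.
Proof.
move=> k_gt1; have [le_succ le_pred] := B_succ_near k_gt1 n.
have k_ge2 : 2 <= INR k by apply: (le_INR 2); apply/leP.
have pow_pos m : 0 < INR k ^ m by apply: pow_lt; lra.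
have powE : INR k ^ n.+1 = INR k ^ (n.+1 - n./2) * INR k ^ n./2.
  by rewrite -pow_add; congr (_ ^ _); have := half_bounds n; lia.
have -> : P k n.+1 - P k n = (INR (B k n.+1) - INR (B k n * k)) / INR k ^ n.+1.
  by rewrite /P !INR_expn mult_INR /=; field; split; [apply: pow_nonzero|]; lra.
have den_pos := pow_pos n.+1.
rewrite Rabs_div ?(Rabs_pos_eq (_ ^ _)); try lra.
apply: Rle_trans (_ : INR (4 * k ^ (n.+1 - n./2)) / INR k ^ n.+1 <= _).
  apply: Rmult_le_compat_r; first by apply/Rlt_le/Rinv_0_lt_compat.
  exact: Rabs_INR_sub_le.
rewrite mult_INR INR_expn powE /=; right; field.
by split; apply: Rgt_not_eq.
Qed.

(* (3/4)^2 x >= 9/8 > 1, so (3/4)^n decays more slowly than x^(-n/2). *)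
Lemma inv_pow_half_le x n : 2 <= x -> 4 / x ^ n./2 <= 8 * (3/4) ^ n.
Proof.
move=> x_ge2; set j := n./2.
have nE : n = (j + j + odd n)%N by have := odd_double_half n; rewrite -addnn -/j; lia.
have pow_pos : 0 < x ^ j by apply: pow_lt; lra.
have growth : 1 <= (3/4 * (3/4)) ^ j * x ^ j.
  rewrite -Rpow_mult_distr; apply: pow_R1_Rle; lra.
have odd_le : 3/4 <= (3/4) ^ odd n by case: (odd n) => /=; lra.
apply: (Rmult_le_reg_r (x ^ j)) => //.
have -> : 4 / x ^ j * x ^ j = 4 by field; lra.
by rewrite nE !pow_add -Rpow_mult_distr; nra.
Qed.

Lemma Un_cv_of_geometric_increments (u : nat -> R) C q : 0 <= q < 1 ->
  (forall n, Rabs (u n.+1 - u n) <= C * q ^ n) -> exists l, Un_cv u l.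
Proof.
move=> q01 du_le; have [l sum_l] : ex_series (fun n => u n.+1 - u n).
  apply: (@ex_series_le _ _ _ (fun n => C * q ^ n)) => [n|]; first exact: du_le.
  by apply/ex_series_scal_l/ex_series_geom; rewrite Rabs_pos_eq; lra.
have sumE n : sum_n (fun m => u m.+1 - u m) n = u n.+1 - u 0%N.
  by elim: n => [|n IH]; rewrite ?sum_O ?sum_Sn ?IH /plus /=; ring.
exists (l + u 0%N); apply/is_lim_seq_Reals/is_lim_seq_incr_1.
apply: (is_lim_seq_ext (fun n => sum_n (fun m => u m.+1 - u m) n + u 0%N)).
  by move=> n; rewrite sumE; ring.
exact: is_lim_seq_plus' sum_l (is_lim_seq_const _).
Qed.

Theorem theorem12 (k : nat) : (2 <= k)%N ->
  exists Pk : R, Un_cv (fun n => P k n) Pk.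
Proof.
move=> k_gt1; apply: (@Un_cv_of_geometric_increments _ 8 (3/4)); first lra.
move=> n; apply: Rle_trans (P_succ_sub_le n k_gt1) (inv_pow_half_le _ _).
by apply: (le_INR 2); apply/leP.
Qed.
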